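(* Let $J$ be a subgroup of the group $\mathcal{J}$ of simple-currents. Then $J$ contains no quaternionic elements if and only if there is a group homomorphism $\epsilon:J\to\widehat{J}$, $j\mapsto\epsilon_j$, satisfying $$\mathcal{Q}_j(j')\,\epsilon_j(j')\,\epsilon_{j'}(j)=1\quad\forall j,j'\in J,\qquad \epsilon_j(j)=T_{j,j}\overline{T_{\mathbf{0},\mathbf{0}}}\quad\forall j\in J.$$ Moreover, if $J$ contains no quaternionic elements, the set of all such $\epsilon$ is in bijection with $H^2(J;\mathbb{T})$.
   Context: Let $\mathcal{C}$ be a modular tensor category, $\Phi$ its finite set of isomorphism classes of simple objects, $\mathbf{0}$ the unit class, and $S,T$ its modular data matrices (indexed by $\Phi$). Simple-currents are the invertible simple objects; their classes form a finite abelian group $\mathcal{J}\subseteq\Phi$ under fusion. For $a\in\Phi$, $\mathcal{Q}_a\in\widehat{\mathcal{J}}$ is the character $\mathcal{Q}_a(j)=S_{j,a}S_{\mathbf{0},\mathbf{0}}/(S_{j,\mathbf{0}}S_{\mathbf{0},a})$. An element $j\in\mathcal{J}$ is quaternionic if the multiplicative order of $\mathcal{Q}_j(j)$ in $\mathbb{C}^\times$ equals the order of $j$ in $\mathcal{J}$ and this order is even. $H^2(J;\mathbb{T})$ is group cohomology with trivial coefficients in the unit circle. *)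

From mathcomp Require Import all_boot all_order all_algebra all_fingroup all_field.
Set Implicit Arguments. Unset Strict Implicit. Unset Printing Implicit Defensive.
Import GRing.Theory Num.Theory.
Local Open Scope ring_scope.

(* Modular data: Phi = simple classes, o = unit class 0, S T : Phi x Phi matrices
   (as functions), over the algebraic complex numbers algC.
   The simple-currents group is modelled as an abstract finite group gT with an
   embedding cur : gT -> Phi (cur j = the class of the simple current j), the
   group law of gT being fusion. *)

Definition Qch (Phi : finType) (o : Phi) (S : Phi -> Phi -> algC) (a x : Phi) : algC :=
  S x a * S o o / (S x o * S o a).

Definition QJ (Phi : finType) (o : Phi) (S : Phi -> Phi -> algC)
    (gT : finGroupType) (cur : gT -> Phi) (j j' : gT) : algC :=
  Qch o S (cur j) (cur j').

(* Standard facts valid for the modular data of any modular tensor category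
   (with the paper's conventions), restricted to what concerns simple currents. *)
Definition sc_modular_data (Phi : finType) (o : Phi) (S T : Phi -> Phi -> algC)
    (gT : finGroupType) (cur : gT -> Phi) : Prop :=
  [/\ abelian [set: gT], injective cur, cur 1%g = o,
      (forall a b, S a b = S b a)
    & (forall a, S o a != 0)] /\
  [/\
      (forall a, `|T a a| = 1),
      (forall a (j k : gT), Qch o S a (cur (j * k)%g) = Qch o S a (cur j) * Qch o S a (cur k)),
      (forall j k : gT, QJ o S cur j k =
          T (cur j) (cur j) * T (cur k) (cur k) / (T (cur (j * k)%g) (cur (j * k)%g) * T o o))
    & (forall j : gT, T (cur j^-1%g) (cur j^-1%g) = T (cur j) (cur j))].

Definition quaternionic (Phi : finType) (o : Phi) (S : Phi -> Phi -> algC)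
    (gT : finGroupType) (cur : gT -> Phi) (j : gT) : bool :=
  (#[j]%g).-primitive_root (QJ o S cur j j) && ~~ odd #[j]%g.

(* eps : J -> \hat J, j |-> eps_j, written eps j j' = eps_j(j'); only its values
   on J x J matter. *)
Definition eps_ok (Phi : finType) (o : Phi) (S T : Phi -> Phi -> algC)
    (gT : finGroupType) (cur : gT -> Phi) (J : {group gT}) (eps : gT -> gT -> algC) : Prop :=
  [/\
      (forall j k, j \in J -> k \in J -> `|eps j k| = 1),
      (forall j k k', j \in J -> k \in J -> k' \in J -> eps j (k * k')%g = eps j k * eps j k'),
      (forall j j' k, j \in J -> j' \in J -> k \in J -> eps (j * j')%g k = eps j k * eps j' k),
      (forall j j', j \in J -> j' \in J -> QJ o S cur j j' * eps j j' * eps j' j = 1)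
    & (forall j, j \in J -> eps j j = T (cur j) (cur j) * (T o o)^*)].

(* Group cohomology H^2(J; T), trivial coefficients in the unit circle T:
   normalized-free 2-cocycles modulo coboundaries. *)
Definition cocycle2 (gT : finGroupType) (J : {group gT}) (w : gT -> gT -> algC) : Prop :=
  (forall a b, a \in J -> b \in J -> `|w a b| = 1) /\
  (forall a b c, a \in J -> b \in J -> c \in J ->
     w b c * w a (b * c)%g = w (a * b)%g c * w a b).

Definition cohomologous (gT : finGroupType) (J : {group gT}) (w w' : gT -> gT -> algC) : Prop :=
  exists beta : gT -> algC,
    (forall a, a \in J -> `|beta a| = 1) /\
    (forall a b, a \in J -> b \in J -> w' a b = w a b * beta a * beta b / beta (a * b)%g).

(* The set {eps | eps_ok eps} (functions on J x J) is in bijection with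
   H^2(J;T) = {cocycles}/cohomologous: there is a map F to cocycles inducing a
   well-defined, injective and surjective map to cohomology classes. *)
Definition eps_H2_bijection (Phi : finType) (o : Phi) (S T : Phi -> Phi -> algC)
    (gT : finGroupType) (cur : gT -> Phi) (J : {group gT}) : Prop :=
  exists F : (gT -> gT -> algC) -> (gT -> gT -> algC),
    [/\ (forall eps, eps_ok o S T cur J eps -> cocycle2 J (F eps)),
        (forall eps eps', eps_ok o S T cur J eps -> eps_ok o S T cur J eps' ->
           (forall j k, j \in J -> k \in J -> eps j k = eps' j k) ->
           cohomologous J (F eps) (F eps')),
        (forall eps eps', eps_ok o S T cur J eps -> eps_ok o S T cur J eps' ->
           cohomologous J (F eps) (F eps') ->
           forall j k, j \in J -> k \in J -> eps j k = eps' j k)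
      & (forall w, cocycle2 J w ->
           exists2 eps, eps_ok o S T cur J eps & cohomologous J (F eps) w)].

From mathcomp Require Import all_boot all_order all_algebra all_fingroup all_field.
From mathcomp Require Import all_solvable ring zify.
From Stdlib Require Import ClassicalEpsilon.
Import GRing.Theory Num.Theory.
Set Implicit Arguments. Unset Strict Implicit. Unset Printing Implicit Defensive.

(* J is abelian, hence an internal direct product <x_1> x ... x <x_r> of cyclic
   groups, and a (bi)multiplicative map from J to the unit circle can be freely
   prescribed on the generators x_i, subject only to order conditions.
   With twist j = T_jj conj(T_00) one has twist (j k) = twist j twist k / Q_j(k)
   and Q_j(j) twist(j)^2 = 1. For a solution eps, eps_j(j) = twist j has order
   dividing #[j], whereas a quaternionic j has twist(j)^#[j] = -1; conversely, if
   twist(x)^#[x] = -1 then the 2-primary part of x is quaternionic. When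
   twist(x)^#[x] = 1 throughout J, the bicharacter taking the value twist x_i at
   (x_i, x_i), Q_{x_i}(x_k)^-1 at (x_i, x_k) for i < k and 1 for i > k is a
   solution.
   Two solutions differ by an alternating bicharacter, and the commutator pairing
   w(a,b)/w(b,a) identifies H^2(J;T) with the alternating bicharacters: a cocycle
   with trivial pairing is symmetric, hence defines an abelian extension of J by
   the circle, which splits because the circle is divisible. *)

Definition mpow (A : Type) (mul : A -> A -> A) (one : A) (a : A) (n : nat) : A :=
  iter n (mul a) one.

Definition dlog (gT : finGroupType) (x y : gT) : nat :=
  index y (mkseq (fun i => (x ^+ i)%g) #[x]%g).

Local Open Scope group_scope.

Lemma dlogP (gT : finGroupType) (x y : gT) : y \in <[x]> -> x ^+ dlog x y = y.
Proof.
case/cycleP=> i ->; rewrite /dlog; set s := mkseq _ _.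
have xi_s : x ^+ i \in s.
  apply/mapP; exists (i %% #[x]); last by rewrite expg_mod_order.
  by rewrite mem_iota ltn_mod order_gt0.
rewrite -[RHS](nth_index 1 xi_s) nth_mkseq //.
by rewrite -[X in _ < X](size_mkseq (fun k => x ^+ k) #[x]) index_mem.
Qed.

Lemma dlog_eq_mod (gT : finGroupType) (x y : gT) k :
  x ^+ k = y -> (dlog x y = k %[mod #[x]])%N.
Proof.
by move=> <-; apply/eqP; rewrite -eq_expg_mod_order dlogP ?mem_cycle.
Qed.

Lemma mem_dprod_gens (gT : finGroupType) (bs : seq gT) (G : {group gT}) :
  \big[dprod/1]_(x <- bs) <[x]> = G -> {subset bs <= G}.
Proof.
elim: bs G => [|x0 bs IH] G //; rewrite big_cons => defG x.
case/dprodP: defG => [[_ H _ defH] <- _ _] /predU1P[-> | Hx].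
  by rewrite defH (subsetP (mulG_subl _ _)) ?cycle_id.
by rewrite defH (subsetP (mulG_subr _ _)) ?(IH _ defH).
Qed.

Section HomomorphismsOnGenerators.

Variables (A : Type) (mul : A -> A -> A) (one : A) (gT : finGroupType).

Lemma eq_hom_on_gens (bs : seq gT) (G : {group gT}) (f g : gT -> A) :
    \big[dprod/1]_(x <- bs) <[x]> = G ->
    f 1 = one -> g 1 = one ->
    {in G &, {morph f : a b / a * b >-> mul a b}} ->
    {in G &, {morph g : a b / a * b >-> mul a b}} ->
  {in bs, f =1 g} -> {in G, f =1 g}.
Proof.
elim: bs G => [|x0 bs IH] G.
  by rewrite big_nil => <- f1 g1 _ _ _ a /set1P ->; rewrite f1 g1.
rewrite big_cons => defG f1 g1 fM gM fg.
case/dprodP: (defG) => [[_ H _ defH] defG' _ _]; rewrite defH in defG'.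
have sHG : H \subset G by rewrite -defG' mulG_subr.
have sXG : <[x0]> \subset G by rewrite -defG' mulG_subl.
have fgH : {in H, f =1 g}.
  apply: (IH H defH) => // [a b Ha Hb | a b Ha Hb | x Hx].
  - by rewrite fM ?(subsetP sHG).
  - by rewrite gM ?(subsetP sHG).
  - by apply: fg; rewrite inE Hx orbT.
have x0G : x0 \in G by rewrite (subsetP sXG) ?cycle_id.
have fgX k : f (x0 ^+ k) = g (x0 ^+ k).
  elim: k => [|k IHk]; first by rewrite f1 g1.
  by rewrite expgS fM ?gM ?groupX // IHk fg ?mem_head.
move=> a; rewrite -defG' => /mulsgP[y h /cycleP[k ->] Hh ->].
have hG : h \in G by rewrite (subsetP sHG).
by rewrite fM ?gM ?groupX // fgX fgH.
Qed.

(* The operation need only be a commutative monoid on the elements satisfying P: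
   the extension of J by the circle built below is one only over J. *)
Variable P : A -> Prop.
Hypotheses (P1 : P one) (PM : forall a b, P a -> P b -> P (mul a b)).
Hypothesis mulA : forall a b c, P a -> P b -> P c -> mul a (mul b c) = mul (mul a b) c.
Hypothesis mulC : forall a b, P a -> P b -> mul a b = mul b a.
Hypothesis mul1 : forall a, P a -> mul one a = a.

Lemma mpow_in a n : P a -> P (mpow mul one a n).
Proof. by move=> Pa; elim: n => //= n IH; apply: PM. Qed.

Lemma mpowD a m n : P a ->
  mpow mul one a (m + n) = mul (mpow mul one a m) (mpow mul one a n).
Proof.
move=> Pa; elim: m => [|m IH] /=; first by rewrite mul1 //; apply: mpow_in.
by rewrite IH mulA //; apply: mpow_in.
Qed.

Lemma mpow_mod a N m : P a -> mpow mul one a N = one ->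
  mpow mul one a m = mpow mul one a (m %% N).
Proof.
move=> Pa aN1; rewrite {1}(divn_eq m N); elim: (m %/ N) => [|q IH].
  by rewrite mul0n add0n.
by rewrite mulSn -addnA mpowD // aN1 mul1 //; apply: mpow_in.
Qed.

Lemma mulACA_in a b c d : P a -> P b -> P c -> P d ->
  mul (mul a b) (mul c d) = mul (mul a c) (mul b d).
Proof.
move=> Pa Pb Pc Pd; have Pcd := PM Pc Pd; have Pbd := PM Pb Pd.
by rewrite -!mulA //; congr (mul a _); rewrite !mulA // (mulC Pb Pc).
Qed.

Lemma hom_from_gens (bs : seq gT) (G : {group gT}) (v : gT -> A) :
    \big[dprod/1]_(x <- bs) <[x]> = G ->
    (forall x, x \in bs -> P (v x) /\ mpow mul one (v x) #[x] = one) ->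
  exists f : gT -> A, [/\ f 1 = one, {in G, forall a, P (f a)},
     {in G &, {morph f : a b / a * b >-> mul a b}} & {in bs, f =1 v}].
Proof.
elim: bs G => [|x0 bs IH] G.
  rewrite big_nil => <- _; exists (fun=> one); split=> // a b _ _.
  by rewrite mul1.
rewrite big_cons => defG Hv.
case/dprodP: (defG) => [[_ H _ defH] defG' cXH tiXH].
rewrite defH in defG' cXH tiXH.
have Hv_bs x : x \in bs -> P (v x) /\ mpow mul one (v x) #[x] = one.
  by move=> Hx; apply: Hv; rewrite inE Hx orbT.
have [fH [fH1 PfH fHM fHv]] := IH H defH Hv_bs.
have [Pv0 v0_order] := Hv x0 (mem_head _ _).
pose pw k := mpow mul one (v x0) k.
have Ppw k : P (pw k) by apply: mpow_in.
have pw_expo k : pw (dlog x0 (x0 ^+ k)) = pw k.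
  rewrite /pw (mpow_mod (dlog _ _) Pv0 v0_order) (mpow_mod k Pv0 v0_order).
  by rewrite (dlog_eq_mod (erefl (x0 ^+ k))).
pose f a := mul (pw (dlog x0 (divgr <[x0]> H a))) (fH (remgr <[x0]> H a)).
have fE k h : h \in H -> f (x0 ^+ k * h) = mul (pw k) (fH h).
  by move=> Hh; rewrite /f (divgrMid tiXH) ?(remgrMid tiXH) ?mem_cycle // pw_expo.
exists f; split.
- by rewrite -[1](mulg1 (x0 ^+ 0)) fE // fH1 mul1.
- move=> a; rewrite -defG' => /mulsgP[_ h /cycleP[k ->] Hh ->].
  by rewrite fE //; apply: PM; [apply: Ppw | apply: PfH].
- move=> a b; rewrite -defG'.
  move=> /mulsgP[_ h /cycleP[k ->] Hh ->] /mulsgP[_ h' /cycleP[k' ->] Hh' ->].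
  have -> : x0 ^+ k * h * (x0 ^+ k' * h') = x0 ^+ (k + k') * (h * h').
    have cx : commute h (x0 ^+ k') by apply: (centsP cXH); rewrite ?mem_cycle.
    by rewrite expgD -!mulgA (mulgA h) cx -!mulgA.
  rewrite !fE ?groupM // fHM // /pw mpowD //.
  exact: mulACA_in (Ppw k) (Ppw k') (PfH h Hh) (PfH h' Hh').
- move=> x /predU1P[-> | Hx].
    have := fE 1%N 1 (group1 H); rewrite expg1 mulg1 => ->.
    by rewrite fH1 (mulC (Ppw 1%N) P1) mul1 //= (mulC Pv0 P1) mul1.
  have := fE 0%N x (mem_dprod_gens defH Hx); rewrite expg0 mul1g => ->.
  by rewrite fHv // mul1 //; case: (Hv_bs x Hx).
Qed.

End HomomorphismsOnGenerators.

Local Close Scope group_scope.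
Local Open Scope ring_scope.

Lemma prim_root_exp2 (R : idomainType) (z : R) a :
  z ^+ (2 ^ a.+1) = 1 -> z ^+ (2 ^ a) != 1 -> (2 ^ a.+1).-primitive_root z.
Proof.
move=> z_order z_half; have [d prim_d] := prim_order_exists (expn_gt0 2 a.+1) z_order.
case/(dvdn_pfactor _ _ (isT : prime 2)) => b b_le d_eq.
have [b_eq | b_ne] := eqVneq b a.+1; first by rewrite -b_eq -d_eq.
have : (d %| 2 ^ a)%N by rewrite d_eq dvdn_exp2l // -ltnS ltn_neqAle b_ne b_le.
by rewrite (prim_order_dvd prim_d) (negPf z_half).
Qed.

Lemma unit_norm_neq0 (z : algC) : `|z| = 1 -> z != 0.
Proof. by move=> z1; rewrite -normr_eq0 z1 oner_eq0. Qed.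

Lemma unit_norm_idem (z : algC) : `|z| = 1 -> z * z = z -> z = 1.
Proof. by move=> z1 zz; apply: (mulfI (unit_norm_neq0 z1)); rewrite zz mulr1. Qed.

Section MultiplicativeMaps.

Variables (gT : finGroupType) (J : {group gT}).

Definition ishom (f : gT -> algC) :=
  f 1%g = 1 /\ {in J &, {morph f : a b / (a * b)%g >-> a * b}}.

Definition bichar (w : gT -> gT -> algC) :=
  [/\ (forall j k, j \in J -> k \in J -> `|w j k| = 1),
      (forall j k k', j \in J -> k \in J -> k' \in J -> w j (k * k')%g = w j k * w j k')
    & (forall j j' k, j \in J -> j' \in J -> k \in J -> w (j * j')%g k = w j k * w j' k)].

Lemma ishom1 : ishom (fun=> 1).
Proof. by split=> // a b _ _; rewrite mulr1. Qed.

Lemma ishomM f g : ishom f -> ishom g -> ishom (fun a => f a * g a).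
Proof.
move=> [f1 fM] [g1 gM]; split=> [|a b Ha Hb]; first by rewrite f1 g1 mulr1.
by rewrite fM // gM // mulrACA.
Qed.

Lemma ishomX f n : ishom f -> ishom (fun a => f a ^+ n).
Proof.
move=> [f1 fM]; split=> [|a b Ha Hb]; first by rewrite f1 expr1n.
by rewrite fM // exprMn.
Qed.

Lemma ishom_expg f a n : ishom f -> a \in J -> f (a ^+ n)%g = f a ^+ n.
Proof.
move=> [f1 fM] Ha; elim: n => [|n IH]; first by rewrite expg0 f1.
by rewrite expgS fM ?groupX // IH exprS.
Qed.

Lemma ishom_order f a : ishom f -> a \in J -> f a ^+ #[a]%g = 1.
Proof. by move=> hf Ha; rewrite -ishom_expg // expg_order; case: hf. Qed.

Lemma ishom_norm f a : ishom f -> a \in J -> `|f a| = 1.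
Proof.
move=> hf Ha; apply/eqP; rewrite -(pexpr_eq1 (order_gt0 a) (normr_ge0 _)).
by rewrite -normrX ishom_order // normr1.
Qed.

Lemma bichar_homr w j : bichar w -> j \in J -> ishom (w j).
Proof.
case=> w_norm wMr _ Hj; split=> [|a b Ha Hb]; last exact: wMr.
by apply: unit_norm_idem; rewrite ?w_norm // -wMr ?mulg1.
Qed.

Lemma bichar_homl w k : bichar w -> k \in J -> ishom (fun j => w j k).
Proof.
case=> w_norm _ wMl Hk; split=> [|a b Ha Hb]; last exact: wMl.
by apply: unit_norm_idem; rewrite ?w_norm // -wMl ?mulg1.
Qed.

Lemma bichar_order w x y : bichar w -> x \in J -> y \in J ->
  w x y ^+ #[x]%g = 1 /\ w x y ^+ #[y]%g = 1.
Proof.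
move=> bw Hx Hy; split; first exact: (ishom_order (bichar_homl bw Hy)).
exact: (ishom_order (bichar_homr bw Hx)).
Qed.

Lemma bicharM w1 w2 : bichar w1 -> bichar w2 -> bichar (fun j k => w1 j k * w2 j k).
Proof.
move=> [n1 r1 l1] [n2 r2 l2]; split=> [j k Hj Hk | j k k' Hj Hk Hk' | j j' k Hj Hj' Hk].
- by rewrite normrM n1 // n2 // mulr1.
- by rewrite r1 // r2 // mulrACA.
- by rewrite l1 // l2 // mulrACA.
Qed.

Lemma bicharV w : bichar w -> bichar (fun j k => (w j k)^-1).
Proof.
move=> [n r l]; split=> [j k Hj Hk | j k k' Hj Hk Hk' | j j' k Hj Hj' Hk].
- by rewrite normfV n // invr1.
- by rewrite r // invfM.
- by rewrite l // invfM.
Qed.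

Lemma bichar1 : bichar (fun _ _ => 1).
Proof. by split=> *; rewrite ?normr1 ?mulr1. Qed.

Lemma bichar_tr w : bichar w -> bichar (fun j k => w k j).
Proof. by move=> [n r l]; split=> *; [apply: n | apply: l | apply: r]. Qed.

Variables (bs : seq gT).
Hypothesis dJ : \big[dprod/1%g]_(x <- bs) <[x]>%g = J.

Lemma eq_ishom_on_gens f g : ishom f -> ishom g -> {in bs, f =1 g} -> {in J, f =1 g}.
Proof. by move=> [f1 fM] [g1 gM]; apply: (eq_hom_on_gens (mul := *%R) dJ f1 g1 fM gM). Qed.

Definition hom_ext (v : gT -> algC) : gT -> algC :=
  epsilon (inhabits (fun=> 1)) (fun f => ishom f /\ {in bs, f =1 v}).

Lemma hom_extP v : (forall x, x \in bs -> v x ^+ #[x]%g = 1) ->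
  ishom (hom_ext v) /\ {in bs, hom_ext v =1 v}.
Proof.
move=> v_order; apply: (epsilon_spec _ (fun f => ishom f /\ {in bs, f =1 v})).
have [|f [f1 _ fM fv]] := @hom_from_gens _ *%R 1 gT (fun=> True) I (fun _ _ _ _ => I)
    (fun a b c _ _ _ => mulrA a b c) (fun a b _ _ => mulrC a b) (fun a _ => mul1r a) _ _ v dJ.
  by move=> x Hx; rewrite /mpow iter_mulr_1 v_order.
by exists f.
Qed.

Lemma eq_bichar_on_gens w1 w2 : bichar w1 -> bichar w2 ->
    (forall x y, x \in bs -> y \in bs -> w1 x y = w2 x y) ->
  forall j k, j \in J -> k \in J -> w1 j k = w2 j k.
Proof.
move=> b1 b2 e12 j k Hj Hk.
apply: (eq_ishom_on_gens (bichar_homl b1 Hk) (bichar_homl b2 Hk)) => // x Hx.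
have xJ := mem_dprod_gens dJ Hx.
by apply: (eq_ishom_on_gens (bichar_homr b1 xJ) (bichar_homr b2 xJ)) => // y; apply: e12.
Qed.

Lemma bichar_from_gens (M : gT -> gT -> algC) :
    (forall x y, x \in bs -> y \in bs -> M x y ^+ #[x]%g = 1 /\ M x y ^+ #[y]%g = 1) ->
  exists2 w, bichar w & forall x y, x \in bs -> y \in bs -> w x y = M x y.
Proof.
move=> M_order.
pose chi y := hom_ext (M^~ y).
have chiP y : y \in bs -> ishom (chi y) /\ {in bs, chi y =1 M^~ y}.
  by move=> Hy; apply: hom_extP => x Hx; case: (M_order x y Hx Hy).
pose w j := hom_ext (fun y => chi y j).
have wP j : j \in J -> ishom (w j) /\ {in bs, w j =1 fun y => chi y j}.
  move=> Hj; apply: hom_extP => y Hy; have [chi_y chi_yM] := chiP y Hy.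
  apply: (eq_ishom_on_gens (ishomX _ chi_y) ishom1) => // x Hx.
  by rewrite /= chi_yM //; case: (M_order x y Hx Hy).
exists w; last first.
  by move=> x y Hx Hy; rewrite (wP x (mem_dprod_gens dJ Hx)).2 // (chiP y Hy).2.
split=> [j k Hj Hk | j k k' Hj Hk Hk' | j j' k Hj Hj' Hk].
- exact: ishom_norm (wP j Hj).1 Hk.
- exact: (wP j Hj).1.2.
- have wjj' := (wP _ (groupM Hj Hj')).1.
  apply: (eq_ishom_on_gens wjj' (ishomM (wP j Hj).1 (wP j' Hj').1)) => // y Hy.
  by rewrite /= !(wP _ _).2 ?groupM // (chiP y Hy).1.2.
Qed.

Lemma eq_on_gens_of_defect (f g : gT -> algC) (c : gT -> gT -> algC) :
    f 1%g = 1 -> g 1%g = 1 -> {in J, forall a, g a != 0} ->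
    (forall a b, a \in J -> b \in J -> c a b != 0) ->
    (forall a b, a \in J -> b \in J -> f (a * b)%g = f a * f b * c a b) ->
    (forall a b, a \in J -> b \in J -> g (a * b)%g = g a * g b * c a b) ->
  {in bs, f =1 g} -> {in J, f =1 g}.
Proof.
move=> f1 g1 g_neq0 c_neq0 fM gM fg a Ha.
have ratio_hom : ishom (fun a => f a / g a).
  split=> [|x y Hx Hy]; first by rewrite f1 g1 divr1.
  have := g_neq0 x Hx; have := g_neq0 y Hy; have := c_neq0 x y Hx Hy.
  by rewrite fM // gM // => *; field; apply/and3P.
have ratio1 : {in J, (fun a => f a / g a) =1 (fun=> 1)}.
  apply: (eq_ishom_on_gens ratio_hom ishom1) => x Hx.
  by rewrite /= fg // divff // g_neq0 // (mem_dprod_gens dJ Hx).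
by rewrite -[f a](divfK (g_neq0 a Ha)) ratio1 // mul1r.
Qed.

End MultiplicativeMaps.

Definition cpair (gT : finGroupType) (w : gT -> gT -> algC) a b := w a b / w b a.

Definition alternating (gT : finGroupType) (J : {group gT}) (d : gT -> gT -> algC) :=
  bichar J d /\ {in J, forall a, d a a = 1}.

Section Cocycles.

Variables (gT : finGroupType) (J : {group gT}).
Hypothesis cJ : abelian J.

Let commJ a b : a \in J -> b \in J -> (a * b = b * a)%g.
Proof. by move=> Ha Hb; apply: (centsP cJ). Qed.

Lemma bichar_cocycle w : bichar J w -> cocycle2 J w.
Proof. by move=> [n r l]; split=> // a b c Ha Hb Hc; rewrite r // l //; ring. Qed.

Lemma cocycle_neq0 w a b : cocycle2 J w -> a \in J -> b \in J -> w a b != 0.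
Proof. by move=> [w_norm _] Ha Hb; rewrite unit_norm_neq0 ?w_norm. Qed.

Lemma cpair_alternating w : cocycle2 J w -> alternating J (cpair w).
Proof.
move=> cw; have [w_norm w_cocycle] := cw.
have nz a b : a \in J -> b \in J -> w a b != 0 by apply: cocycle_neq0.
have cpairMl a b c : a \in J -> b \in J -> c \in J ->
    cpair w (a * b)%g c = cpair w a c * cpair w b c.
  move=> Ha Hb Hc; rewrite /cpair.
  have E1 : w (a * b)%g c = w b c * w a (b * c)%g / w a b.
    by rewrite w_cocycle // mulfK // nz.
  have E2 : w c (a * b)%g = w (c * a)%g b * w c a / w a b.
    by rewrite -w_cocycle // (mulrC (w a b)) mulfK // nz.
  have E3 : w a (b * c)%g = w (a * c)%g b * w a c / w c b.
    by rewrite (commJ Hb Hc) -w_cocycle // (mulrC (w c b)) mulfK // nz.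
  rewrite E1 E2 E3 (commJ Hc Ha).
  have := nz a b Ha Hb; have := nz c b Hc Hb; have := nz a c Ha Hc.
  have := nz c a Hc Ha; have := nz b c Hb Hc; have := nz (a * c)%g b (groupM Ha Hc) Hb.
  by move=> *; field; repeat (apply/andP; split).
have cpairV a b : cpair w a b = (cpair w b a)^-1 by rewrite /cpair invf_div.
split; last by move=> a Ha; rewrite /cpair divff ?nz.
split=> [j k Hj Hk | j k k' Hj Hk Hk' | ]; last exact: cpairMl.
  by rewrite /cpair normf_div !w_norm // divr1.
by rewrite cpairV cpairMl // invfM -!cpairV.
Qed.

Lemma alternating_anti d a b : alternating J d -> a \in J -> b \in J ->
  d a b * d b a = 1.
Proof.
move=> [[_ dMr dMl] d_diag] Ha Hb.
by have := d_diag _ (groupM Ha Hb); rewrite dMl ?groupM // !dMr // !d_diag // mul1r mulr1.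
Qed.

Lemma cohomologous_cpair w w' : cocycle2 J w -> cohomologous J w w' ->
  forall a b, a \in J -> b \in J -> cpair w' a b = cpair w a b.
Proof.
move=> cw [beta [beta_norm w'E]] a b Ha Hb; rewrite /cpair !w'E // (commJ Ha Hb).
have := cocycle_neq0 cw Ha Hb; have := cocycle_neq0 cw Hb Ha.
have := unit_norm_neq0 (beta_norm a Ha); have := unit_norm_neq0 (beta_norm b Hb).
have := unit_norm_neq0 (beta_norm _ (groupM Hb Ha)).
by move=> *; field; repeat (apply/andP; split).
Qed.

Variables (bs : seq gT).
Hypothesis dJ : \big[dprod/1%g]_(x <- bs) <[x]>%g = J.

Lemma alternating_cpair_bichar d : alternating J d ->
  exists2 b, bichar J b & forall x y, x \in J -> y \in J -> cpair b x y = d x y.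
Proof.
move=> alt_d; have [bd d_diag] := alt_d.
have [|b bb b_gens] := bichar_from_gens dJ
  (M := fun x y => if (index x bs < index y bs)%N then d x y else 1).
  move=> x y Hx Hy; case: ifP => _; last by rewrite !expr1n.
  exact: bichar_order bd (mem_dprod_gens dJ Hx) (mem_dprod_gens dJ Hy).
exists b => //.
apply: (eq_bichar_on_gens dJ (cpair_alternating (bichar_cocycle bb)).1 bd).
move=> x y Hx Hy; rewrite /cpair !b_gens //.
have [xJ yJ] := (mem_dprod_gens dJ Hx, mem_dprod_gens dJ Hy).
have [lt_xy | lt_yx | eq_xy] := ltngtP (index x bs) (index y bs).
- by rewrite divr1.
- have [d_norm _ _] := bd.
  by rewrite -(alternating_anti alt_d xJ yJ) mulfK // unit_norm_neq0 ?d_norm.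
- by rewrite (index_inj x Hx Hy eq_xy) divr1 d_diag.
Qed.

End Cocycles.

Section AbelianExtension.

Variables (gT : finGroupType) (J : {group gT}) (u : gT -> gT -> algC).
Hypotheses (cJ : abelian J) (u_cocycle : cocycle2 J u).
Hypothesis u_sym : forall a b, a \in J -> b \in J -> u a b = u b a.

(* The extension of J by the circle defined by the cocycle u, on pairs (t, a)
   with a in J. *)
Definition ext_mul (p q : algC * gT) := (p.1 * q.1 / u p.2 q.2, (p.2 * q.2)%g).
Definition ext_one : algC * gT := (u 1%g 1%g, 1%g).

Let u_neq0 a b : a \in J -> b \in J -> u a b != 0.
Proof. exact: cocycle_neq0. Qed.

Let u_norm a b : a \in J -> b \in J -> `|u a b| = 1.
Proof. exact: u_cocycle.1. Qed.

Lemma ext_mulA p q r : p.2 \in J -> q.2 \in J -> r.2 \in J ->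
  ext_mul p (ext_mul q r) = ext_mul (ext_mul p q) r.
Proof.
case: p q r => [s a] [t b] [r c] /= Ha Hb Hc; rewrite /ext_mul /= mulgA; congr (_, _).
have u_abc : u a (b * c)%g = u (a * b)%g c * u a b / u b c.
  by rewrite -u_cocycle.2 // mulrAC divff ?mul1r ?u_neq0.
have := u_neq0 Ha Hb; have := u_neq0 Hb Hc; have := u_neq0 (groupM Ha Hb) Hc.
by rewrite u_abc => *; field; repeat (apply/andP; split).
Qed.

Lemma ext_mulC p q : p.2 \in J -> q.2 \in J -> ext_mul p q = ext_mul q p.
Proof.
case: p q => [s a] [t b] /= Ha Hb.
by rewrite /ext_mul /= u_sym // (centsP cJ a Ha b Hb) (mulrC s).
Qed.

Lemma ext_mul1 p : p.2 \in J -> ext_mul ext_one p = p.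
Proof.
case: p => [t b] /= Hb; rewrite /ext_mul /= mul1g; congr (_, _).
have u1b : u 1%g b = u 1%g 1%g.
  have := u_cocycle.2 _ _ _ (group1 J) (group1 J) Hb; rewrite !mul1g.
  by move/(mulfI (u_neq0 (group1 J) Hb)).
by rewrite u1b mulrAC divff ?mul1r ?u_neq0.
Qed.

Lemma ext_mpow t x n : mpow ext_mul ext_one (t, x) n =
  (t ^+ n * (mpow ext_mul ext_one (1, x) n).1, (x ^+ n)%g).
Proof.
elim: n t => [|n IH] t; first by rewrite /= mul1r.
have mpowS s : mpow ext_mul ext_one (s, x) n.+1 = ext_mul (s, x) (mpow ext_mul ext_one (s, x) n).
  by [].
by rewrite !mpowS (IH t) (IH 1) /ext_mul /= expr1n !mul1r exprS expgS !mulrA.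
Qed.

Lemma ext_mpow_norm x n : x \in J -> `|(mpow ext_mul ext_one (1, x) n).1| = 1.
Proof.
move=> Hx; elim: n => [|n IH]; first exact: u_norm.
have -> : mpow ext_mul ext_one (1, x) n.+1 = ext_mul (1, x) (mpow ext_mul ext_one (1, x) n).
  by [].
rewrite ext_mpow /= expr1n !mul1r in IH *.
by rewrite normf_div IH u_norm ?groupX // divr1.
Qed.

Lemma symmetric_cocycle_coboundary (bs : seq gT) :
  \big[dprod/1%g]_(x <- bs) <[x]>%g = J -> cohomologous J (fun _ _ => 1) u.
Proof.
move=> dJ.
pose c x := (mpow ext_mul ext_one (1, x) #[x]%g).1.
(* (t x, x) is a lift of x of order #[x]: roots exist in algC. *)
pose t x := #[x]%g.-root (u 1%g 1%g / c x).
have [|f [f1 _ fM ft]] := @hom_from_gens _ ext_mul ext_one gT (fun p => p.2 \in J)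
  (group1 J) (fun p q => @groupM _ J p.2 q.2) ext_mulA ext_mulC ext_mul1 _ _
  (fun x => (t x, x)) dJ.
  move=> x Hx; have xJ := mem_dprod_gens dJ Hx; split=> //.
  rewrite ext_mpow rootCK ?order_gt0 // expg_order divfK //.
  exact: unit_norm_neq0 (ext_mpow_norm _ xJ).
have f2 : {in J, forall a, (f a).2 = a}.
  apply: (eq_hom_on_gens (mul := fun a b => (a * b)%g) dJ (f := fun a => (f a).2)).
  - by rewrite f1.
  - by [].
  - by move=> a b Ha Hb; rewrite /= fM.
  - by [].
  - by move=> x Hx; rewrite /= ft.
have fM1 a b : a \in J -> b \in J -> (f (a * b)%g).1 = (f a).1 * (f b).1 / u a b.
  by move=> Ha Hb; rewrite fM // /ext_mul /= !f2.
have f_norm : {in J, forall a, `|(f a).1| = 1}.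
  have hom_norm : ishom J (fun a => `|(f a).1|).
    split=> [|a b Ha Hb]; first by rewrite f1 /= u_norm.
    by rewrite fM1 // normf_div normrM u_norm // divr1.
  apply: (eq_ishom_on_gens dJ hom_norm (ishom1 J)) => x Hx.
  have xJ := mem_dprod_gens dJ Hx.
  by rewrite /= ft // /t norm_rootC normf_div u_norm // ext_mpow_norm // divr1 rootC1.
have f_neq0 a : a \in J -> (f a).1 != 0 by move=> Ha; rewrite unit_norm_neq0 ?f_norm.
exists (fun a => (f a).1); split=> // a b Ha Hb.
by rewrite fM1 // mul1r invf_div mulrC divfK // mulf_neq0 ?f_neq0.
Qed.

End AbelianExtension.

Lemma cpair_cohomologous (gT : finGroupType) (J : {group gT}) (bs : seq gT) w w' :
    abelian J -> \big[dprod/1%g]_(x <- bs) <[x]>%g = J ->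
    cocycle2 J w -> cocycle2 J w' ->
    (forall a b, a \in J -> b \in J -> cpair w a b = cpair w' a b) ->
  cohomologous J w w'.
Proof.
move=> cJ dJ cw cw' same_cpair.
pose u a b := w' a b / w a b.
have u_cocycle : cocycle2 J u.
  split=> [a b Ha Hb | a b c Ha Hb Hc].
    by rewrite normf_div cw.1 // cw'.1 // divr1.
  by rewrite /u !mulf_div cw'.2 // cw.2.
have u_sym a b : a \in J -> b \in J -> u a b = u b a.
  move=> Ha Hb; have := same_cpair a b Ha Hb; rewrite /cpair /u => e.
  have -> : w' a b = w a b / w b a * w' b a by rewrite e divfK ?(cocycle_neq0 cw').
  have := cocycle_neq0 cw Ha Hb; have := cocycle_neq0 cw Hb Ha.
  by move=> *; field; repeat (apply/andP; split).
have [beta [beta_norm u_cobound]] := symmetric_cocycle_coboundary cJ u_cocycle u_sym dJ.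
exists beta; split=> // a b Ha Hb.
transitivity (w a b * u a b); first by rewrite mulrC divfK ?(cocycle_neq0 cw).
by rewrite u_cobound //; ring.
Qed.

Section ModularData.

Variables (Phi : finType) (o : Phi) (S T : Phi -> Phi -> algC).
Variables (gT : finGroupType) (cur : gT -> Phi).
Hypothesis md : sc_modular_data o S T cur.

Local Notation Q := (QJ o S cur).

Definition twist (j : gT) : algC := T (cur j) (cur j) * (T o o)^*.

Let commG (j k : gT) : (j * k = k * j)%g.
Proof. by have [[cG _ _ _ _] _] := md; apply: (centsP cG); rewrite inE. Qed.

Let T_norm a : `|T a a| = 1.
Proof. by have [_ [T_norm _ _ _]] := md. Qed.

Lemma twist1 : twist 1%g = 1.
Proof.
have [[_ _ cur1 _ _] _] := md.
by rewrite /twist cur1 -normCK T_norm expr1n.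
Qed.

Lemma twist_norm j : `|twist j| = 1.
Proof. by rewrite /twist normrM norm_conjC !T_norm mulr1. Qed.

Lemma twist_neq0 j : twist j != 0.
Proof. exact: unit_norm_neq0 (twist_norm j). Qed.

Lemma Q_twist j k : Q j k = twist j * twist k / twist (j * k)%g.
Proof.
have [_ [_ _ -> _]] := md.
have T00_conj : (T o o)^* = (T o o)^-1 by rewrite invC_norm T_norm expr1n invr1 mul1r.
have := unit_norm_neq0 (T_norm o); have := unit_norm_neq0 (T_norm (cur (j * k)%g)).
by rewrite /twist T00_conj => *; field; repeat (apply/andP; split).
Qed.

Lemma Q_sym j k : Q j k = Q k j.
Proof. by rewrite !Q_twist commG (mulrC (twist j)). Qed.

Lemma Q_bichar (J : {group gT}) : bichar J Q.
Proof.
have [_ [_ QMl _ _]] := md.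
have QMr j k k' : Q j (k * k')%g = Q j k * Q j k' by apply: QMl.
have Q_norm j k : `|Q j k| = 1.
  by rewrite Q_twist normf_div normrM !twist_norm mulr1 divr1.
by split=> // j j' k _ _ _; rewrite Q_sym QMr !(Q_sym k).
Qed.

Lemma twistM j k : twist (j * k)%g = twist j * twist k / Q j k.
Proof.
rewrite Q_twist invf_div mulrC divfK //.
exact: mulf_neq0 (twist_neq0 j) (twist_neq0 k).
Qed.

Lemma Q_diag j : Q j j = (twist j ^+ 2)^-1.
Proof.
have [_ [_ QMr _ Tinv]] := md.
have twistV : twist j^-1%g = twist j by rewrite /twist Tinv.
have QjV : Q j j * Q j j^-1%g = Q j 1%g by rewrite /QJ -QMr mulgV.
rewrite [Q j j^-1%g]Q_twist [Q j 1%g]Q_twist mulgV mulg1 twist1 twistV divr1 in QjV.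
rewrite mulr1 divff ?twist_neq0 // in QjV.
apply: (mulIf (expf_neq0 2 (twist_neq0 j))).
by rewrite mulVf ?expf_neq0 ?twist_neq0 // expr2.
Qed.

Lemma twistX x m : twist (x ^+ m)%g = twist x ^+ (m * m).
Proof.
have Qx_hom := bichar_homr (Q_bichar [set: gT]%G) (in_setT x).
elim: m => [|m IH]; first by rewrite twist1.
rewrite expgS twistM IH (ishom_expg m Qx_hom (in_setT x)) Q_diag exprVn invrK.
by rewrite -exprS -!exprM -exprD; congr (_ ^+ _); lia.
Qed.

Lemma quaternionic_twist_order j : quaternionic o S cur j -> twist j ^+ #[j]%g != 1.
Proof.
case/andP=> prim even; apply/eqP => twist_n.
have n_eq : #[j]%g = (#[j]%g./2).*2 by rewrite -[LHS]odd_double_half (negPf even).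
have h_gt0 : (0 < #[j]%g./2)%N by rewrite -double_gt0 -n_eq order_gt0.
have := prim_order_dvd prim #[j]%g./2.
rewrite gtnNdvd //; last by rewrite {2}n_eq -addnn -addn1 leq_add2l.
by rewrite Q_diag exprVn -exprM mul2n -n_eq twist_n invr1 eqxx.
Qed.

Lemma quaternionic_2part x :
  twist x ^+ #[x]%g = -1 -> quaternionic o S cur (x ^+ (#[x]`_2^')%N)%g.
Proof.
set n := #[x]%g; set m := (n`_2^')%N; set k := (n`_2)%N; set y := (x ^+ m)%g.
move=> twist_n; have nm : (k * m)%N = n := partnC 2%N (order_gt0 x).
have m_odd : odd m by rewrite odd_2'nat part_pnat.
have oy : #[y]%g = k.
  have m_dvd : (m %| n)%N by rewrite -nm dvdn_mull.
  by rewrite orderXdiv // -/n -nm mulnK // (dvdn_gt0 (order_gt0 x) m_dvd).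
have twist_y : twist y ^+ k = -1.
  by rewrite twistX -exprM mulnAC (mulnC m) nm exprM twist_n -signr_odd m_odd expr1.
have [a k_eq] : exists a, k = (2 ^ a)%N by exists (logn 2 n); rewrite /k p_part.
rewrite -/n -/m -/y /quaternionic oy k_eq.
case: a k_eq => [|a] k_eq.
  have y1 : y = 1%g by apply/eqP; rewrite -order_eq1 oy k_eq.
  by move/eqP: twist_y; rewrite k_eq y1 twist1 expr1n eq_sym eqNr oner_eq0.
rewrite oddX /= andbT prim_root_exp2 //.
  by rewrite -k_eq -oy; exact: (bichar_order (Q_bichar [set: gT]%G) (in_setT y) (in_setT y)).1.
by rewrite Q_diag exprVn -exprM -expnS -k_eq twist_y invrN1 eqNr oner_eq0.
Qed.

Lemma noquat_twist_order (J : {group gT}) :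
    (forall j, j \in J -> ~~ quaternionic o S cur j) ->
  {in J, forall x, twist x ^+ #[x]%g = 1}.
Proof.
move=> noq x Hx.
have : (twist x ^+ #[x]%g) ^+ 2 == 1.
  have := (bichar_order (Q_bichar [set: gT]%G) (in_setT x) (in_setT x)).1.
  by rewrite Q_diag exprVn -exprM mulnC exprM => /eqP; rewrite invr_eq1.
rewrite sqrf_eq1 => /orP[/eqP // | /eqP twist_n].
by have := noq _ (groupX (#[x]%g`_2^')%N Hx); rewrite quaternionic_2part.
Qed.

Lemma Q_neq0 j k : Q j k != 0.
Proof.
by rewrite Q_twist; apply: mulf_neq0; [apply: mulf_neq0 | rewrite invr_eq0]; apply: twist_neq0.
Qed.

Section Epsilons.

Variable J : {group gT}.
Local Notation eps_ok := (eps_ok o S T cur J).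

Lemma eps_ok_bichar e : eps_ok e -> bichar J e.
Proof. by case. Qed.

Lemma eps_ok_twist_order e : eps_ok e -> {in J, forall x, twist x ^+ #[x]%g = 1}.
Proof.
move=> ok x Hx; have [_ _ _ _ e_diag] := ok.
by rewrite /twist -e_diag //; exact: (bichar_order (eps_ok_bichar ok) Hx Hx).1.
Qed.

Lemma eps_ok_div e e' : eps_ok e -> eps_ok e' -> alternating J (fun a b => e a b / e' a b).
Proof.
move=> ok ok'; split; first exact: bicharM (eps_ok_bichar ok) (bicharV (eps_ok_bichar ok')).
move=> a Ha; have [_ _ _ _ e_diag] := ok; have [_ _ _ _ e'_diag] := ok'.
by rewrite e_diag // e'_diag // (divff (twist_neq0 a)).
Qed.

Lemma eps_okM e d : eps_ok e -> alternating J d -> eps_ok (fun a b => e a b * d a b).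
Proof.
move=> ok alt_d; have [e_norm eMr eMl e_anti e_diag] := ok.
have [d_norm dMr dMl] := bicharM (eps_ok_bichar ok) alt_d.1.
split=> // [j k Hj Hk | j Hj]; last by rewrite alt_d.2 // mulr1 e_diag.
transitivity ((Q j k * e j k * e k j) * (d j k * d k j)); first by ring.
by rewrite e_anti // (alternating_anti alt_d Hj Hk) mulr1.
Qed.

Variables (bs : seq gT).
Hypothesis dJ : \big[dprod/1%g]_(x <- bs) <[x]>%g = J.

Lemma eps_exists : {in J, forall x, twist x ^+ #[x]%g = 1} -> exists e, eps_ok e.
Proof.
move=> twist_order; have bQ := Q_bichar J.
have [|e be e_gens] := bichar_from_gens dJ (M := fun x y =>
    if (index x bs < index y bs)%N then (Q x y)^-1 else if x == y then twist x else 1).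
  move=> x y Hx Hy; have [xJ yJ] := (mem_dprod_gens dJ Hx, mem_dprod_gens dJ Hy).
  case: ifP => _; first by have [Qx Qy] := bichar_order bQ xJ yJ; rewrite !exprVn Qx Qy invr1.
  by case: eqP => [<- | _]; rewrite ?twist_order ?expr1n.
have e_anti j k : j \in J -> k \in J -> Q j k * e j k * e k j = 1.
  have be3 : bichar J (fun j k => Q j k * e j k * e k j).
    by apply: bicharM; [apply: bicharM | apply: bichar_tr].
  apply: (eq_bichar_on_gens dJ be3 (bichar1 J)) => x y Hx Hy; rewrite /= !e_gens //.
  case: ltngtP => [lt_xy | lt_yx | eq_xy].
  - have -> : (y == x) = false by apply: contraTF lt_xy => /eqP ->; rewrite ltnn.
    by rewrite mulr1 mulfV ?Q_neq0.
  - have -> : (x == y) = false by apply: contraTF lt_yx => /eqP ->; rewrite ltnn.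
    by rewrite mulr1 (Q_sym x y) mulfV ?Q_neq0.
  - rewrite (index_inj x Hx Hy eq_xy) eqxx -mulrA -expr2 Q_diag.
    by rewrite mulVf // expf_neq0 ?twist_neq0.
have [e_norm eMr eMl] := be.
have e_diag : {in J, (fun j => e j j) =1 twist}.
  apply: (eq_on_gens_of_defect dJ (c := fun a b => (Q a b)^-1)).
  - exact: (bichar_homl be (group1 J)).1.
  - exact: twist1.
  - by move=> a _; apply: twist_neq0.
  - by move=> a b _ _; rewrite invr_eq0 Q_neq0.
  - move=> a b Ha Hb; rewrite eMr ?groupM // !eMl //.
    have -> : (Q a b)^-1 = e a b * e b a.
      by apply: (mulfI (Q_neq0 a b)); rewrite mulfV ?Q_neq0 // mulrA e_anti.
    by ring.
  - by move=> a b _ _; rewrite twistM.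
  - by move=> x Hx; rewrite /= e_gens // ltnn eqxx.
by exists e; split=> // j Hj; rewrite e_diag.
Qed.

Lemma eps_H2 : (exists e0, eps_ok e0) -> eps_H2_bijection o S T cur J.
Proof.
case=> e0 ok0; have [[cG _ _ _ _] _] := md.
have cJ : abelian J := abelianS (subsetT J) cG.
have e0_neq0 a b : a \in J -> b \in J -> e0 a b != 0.
  by move=> Ha Hb; have [e0_norm _ _ _ _] := ok0; rewrite unit_norm_neq0 ?e0_norm.
pose Fspec e b := bichar J b /\ forall x y, x \in J -> y \in J -> cpair b x y = e x y / e0 x y.
pose F e := epsilon (inhabits (fun _ _ : gT => 1)) (Fspec e).
have FP e : eps_ok e -> Fspec e (F e).
  move=> ok; apply: epsilon_spec.
  by have [b bb b_cpair] := alternating_cpair_bichar cJ dJ (eps_ok_div ok ok0); exists b.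
have F_cocycle e : eps_ok e -> cocycle2 J (F e) by move=> ok; apply: bichar_cocycle (FP e ok).1.
exists F; split=> //.
- move=> e e' ok ok' ee'; apply: cpair_cohomologous cJ dJ (F_cocycle e ok) (F_cocycle e' ok') _.
  by move=> a b Ha Hb; rewrite (FP e ok).2 // (FP e' ok').2 // ee'.
- move=> e e' ok ok' co j k Hj Hk.
  have := cohomologous_cpair cJ (F_cocycle e ok) co Hj Hk.
  by rewrite (FP e ok).2 // (FP e' ok').2 // => /(mulIf (invr_neq0 (e0_neq0 j k Hj Hk))).
- move=> w cw; have alt_w := cpair_alternating cJ cw.
  exists (fun a b => e0 a b * cpair w a b); first exact: eps_okM.
  have ok := eps_okM ok0 alt_w.
  apply: cpair_cohomologous cJ dJ (F_cocycle _ ok) cw _ => a b Ha Hb.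
  by rewrite (FP _ ok).2 // mulrAC divff ?mul1r ?e0_neq0.
Qed.

End Epsilons.

End ModularData.

Theorem lemma3 (Phi : finType) (o : Phi) (S T : Phi -> Phi -> algC)
    (gT : finGroupType) (cur : gT -> Phi) (J : {group gT}) :
  sc_modular_data o S T cur ->
  ((forall j, j \in J -> ~~ quaternionic o S cur j) <->
     (exists eps : gT -> gT -> algC, eps_ok o S T cur J eps)) /\
  ((forall j, j \in J -> ~~ quaternionic o S cur j) -> eps_H2_bijection o S T cur J).
Proof.
move=> md; have [[cG _ _ _ _] _] := md.
have [bs dJ _] := abelian_structure (abelianS (subsetT J) cG).
have eps_of_noquat noq := eps_exists md dJ (noquat_twist_order md noq).
split=> [|noq]; last by apply: (eps_H2 md dJ); apply: eps_of_noquat.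
split=> [|[e ok] j Hj]; first exact: eps_of_noquat.
apply/negP => /(quaternionic_twist_order md).
by rewrite (eps_ok_twist_order ok Hj) eqxx.
Qed.
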